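(* In the setting described in the context, the process $W(t)$ restricted to the set $\mathcal W$ of allocation states is time reversible; more precisely, for all $W,W'\in\mathcal W$ with $W\neq W'$, $$\binom{\alpha}{W}e^{\gamma\Psi(W)}P_{W,W'}=\binom{\alpha}{W'}e^{\gamma\Psi(W')}P_{W',W},$$ where $\binom{\alpha}{W}:=\frac{\prod_x\alpha_x!}{\prod_{x,y}W_{xy}!}$, $P_{W,W'}$ is the transition rate of $W(t)$ from $W$ to $W'$, and $$\Psi(W)=\sum_{y\in\mathcal X}\sum_{s=0}^{W_y}\Big[\lambda_y-\frac{k_cs}{\beta_y}\Big]+k_a\sum_{x,y\in\mathcal X}\sum_{s=0}^{W_{xy}}s .$$
   Context: $\mathcal X$ is a finite set of units, $\mathcal G=(\mathcal X,\mathcal E)$ a directed graph, $N_x=\{y:(x,y)\in\mathcal E\}$, $\alpha_x,\beta_x$ non-negative integers. A partial allocation state is a matrix $W\in\mathbb N^{\mathcal X\times\mathcal X}$ with $W_{xy}=0$ whenever $(x,y)\notin\mathcal E$, $W^x:=\sum_yW_{xy}\le\alpha_x$, $W_y:=\sum_xW_{xy}\le\beta_y$; it is an allocation state if $W^x=\alpha_x$ for all $x$; $\mathcal W_p,\mathcal W$ denote these sets; $e_{xy}$ is the matrix unit. Fix reals $\lambda_y$, $k_c,k_a\ge0$, $\gamma>0$ and let $f_{xy}(W)=\lambda_y-k_cW_y/\beta_y+k_aW_{xy}$ (in $\Psi$ the term with $s=0$ contributes $\lambda_y$, i.e. $0/0$ is read as $0$). Let $\mathcal X^x(W)=\{y\in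 N_x:W_y<\beta_y\}$ and $p_y(W,x)=e^{\gamma f_{xy}(W+e_{xy})}/\sum_{y'\in\mathcal X^x(W)}e^{\gamma f_{xy'}(W+e_{xy'})}$ for $y\in\mathcal X^x(W)$. Let $P_{\rm all}(W,x),P_{\rm dis}(W,x)\ge0$ with sum $1$, $P_{\rm all}(W,x)=0$ if $W^x=\alpha_x$, $P_{\rm dis}(W,x)=0$ if $W^x=0$. $W(t)$ is the continuous-time Markov process on $\mathcal W_p$ in which each unit $x$ activates at the times of an independent Poisson clock of rate $\nu_x\ge0$; upon activation in state $W$, with probability $P_{\rm all}(W,x)$ unit $x$ chooses $y^*\in\mathcal X^x(W)$ with probability $p_{y^*}(W,x)$ and the state becomes $W+e_{xy^*}$ (nothing happens if $\mathcal X^x(W)=\emptyset$); with probability $P_{\rm dis}(W,x)$ it chooses $\bar y$ with probability $W_{x\bar y}/W^x$, then $y^*\in\mathcal X^x(W-e_{x\bar y})$ with probability $p_{y^*}(W-e_{x\bar y},x)$, and the state becomes $W-e_{x\bar y}+e_{xy^*}$. *)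

From HB Require Import structures.
From mathcomp Require Import all_boot all_order all_algebra.
From mathcomp Require Import all_classical all_reals all_analysis.
Set Implicit Arguments. Unset Strict Implicit. Unset Printing Implicit Defensive.
Import Order.TTheory GRing.Theory Num.Theory.
Local Open Scope ring_scope.

Section Model.
Variables (X : finType) (E : rel X) (alpha beta : X -> nat).

Definition state := {ffun X * X -> nat}.

(* W^x = sum_y W_xy  and  W_y = sum_x W_xy *)
Definition rowsum (W : state) (x : X) : nat := (\sum_(y : X) W (x, y))%N.
Definition colsum (W : state) (y : X) : nat := (\sum_(x : X) W (x, y))%N.

Definition partial_alloc (W : state) : Prop :=
  [/\ forall x y, ~~ E x y -> W (x, y) = 0%N,
      forall x, (rowsum W x <= alpha x)%N &
      forall y, (colsum W y <= beta y)%N].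

Definition alloc (W : state) : Prop :=
  partial_alloc W /\ forall x, rowsum W x = alpha x.

(* W + e_xy and W - e_xy (the latter used only when W_xy > 0). *)
Definition add_e (W : state) (x y : X) : state :=
  [ffun p => (W p + (p == (x, y)))%N].
Definition sub_e (W : state) (x y : X) : state :=
  [ffun p => (W p - (p == (x, y)))%N].

Variable R : realType.
Variables (lambda : X -> R) (kc ka gamma : R).

Definition f (W : state) (x y : X) : R :=
  lambda y - kc * (colsum W y)%:R / (beta y)%:R + ka * (W (x, y))%:R.

Definition avail (W : state) (x : X) : pred X :=
  fun y => E x y && (colsum W y < beta y)%N.

Definition pchoice (W : state) (x y : X) : R :=
  expR (gamma * f (add_e W x y) x y) /
  \sum_(y' | avail W x y') expR (gamma * f (add_e W x y') x y').

Variables (nu : X -> R) (Pall Pdis : state -> X -> R).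

Definition rate (W W' : state) : R :=
  \sum_(x : X) nu x *
    (Pall W x *
       \sum_(y | avail W x y) pchoice W x y * (add_e W x y == W')%:R
   + Pdis W x *
       \sum_(yb | (0 < W (x, yb))%N)
          ((W (x, yb))%:R / (rowsum W x)%:R) *
          \sum_(y | avail (sub_e W x yb) x y)
             pchoice (sub_e W x yb) x y
             * (add_e (sub_e W x yb) x y == W')%:R).

(* Potential Psi(W); the s = 0 term contributes lambda_y (0/0 read as 0,
   which is MathComp's convention x / 0 = 0). *)
Definition Psi (W : state) : R :=
  \sum_(y : X) \sum_(s < (colsum W y).+1) (lambda y - kc * s%:R / (beta y)%:R)
  + ka * \sum_(x : X) \sum_(y : X) \sum_(s < (W (x, y)).+1) (s : nat)%:R.

Definition multinom (W : state) : R :=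
  (\prod_(x : X) (alpha x)`!)%:R / (\prod_(p : X * X) (W p)`!)%:R.

End Model.

(** On allocation states every transition relocates one unit of some [x]
    from [yb] to [y], i.e. goes from [V + e_{x yb}] to [V + e_{x y}] for a
    partial state [V] shared with the reverse transition.  [Psi] is a
    potential for [f], [Psi (V + e_xy) = Psi V + f_xy (V + e_xy)], and
    [binom(alpha, V + e_xy) (V + e_xy)_xy = binom(alpha, V)].  As [x] picks
    [yb] with probability [W_{x yb} / alpha_x], the flux through the
    relocation is [nu_x / alpha_x binom(alpha, V) e^{gamma Psi V}] times
    [e^{gamma f_{x yb}(V + e_{x yb})} e^{gamma f_{xy}(V + e_{xy})} / Z_x(V)],
    which is symmetric in [yb] and [y]. *)
From HB Require Import structures.
From mathcomp Require Import all_boot all_order all_algebra.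
From mathcomp Require Import all_classical all_reals all_analysis.
From mathcomp Require Import ring zify.
Set Implicit Arguments. Unset Strict Implicit. Unset Printing Implicit Defensive.
Import Order.TTheory GRing.Theory Num.Theory.
Local Open Scope ring_scope.

Lemma big_ord_bump (R : nmodType) (I : finType) (n : I -> nat) (i0 : I)
    (h : I -> nat -> R) :
  \sum_i \sum_(s < (n i + (i == i0)).+1) h i s
  = \sum_i \sum_(s < (n i).+1) h i s + h i0 (n i0).+1.
Proof.
rewrite (bigD1 i0) //= [in RHS](bigD1 i0) //= eqxx addn1 big_ord_recr /=.
have -> : \sum_(i | i != i0) \sum_(s < (n i + (i == i0)).+1) h i s
          = \sum_(i | i != i0) \sum_(s < (n i).+1) h i s.
  by apply: eq_bigr => i /negbTE ->; rewrite addn0.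
by rewrite addrAC.
Qed.

Section Relocation.
Variable X : finType.
Implicit Types (V W : state X) (x y yb : X).

Lemma add_e_at V x y : add_e V x y (x, y) = (V (x, y)).+1.
Proof. by rewrite ffunE eqxx addn1. Qed.

Lemma sub_e_addK V x y : sub_e (add_e V x y) x y = V.
Proof. by apply/ffunP => p; rewrite !ffunE addnK. Qed.

Lemma add_e_subK W x y : (0 < W (x, y))%N -> add_e (sub_e W x y) x y = W.
Proof. by move=> Wxy; apply/ffunP => p; rewrite !ffunE; case: eqP => [->|_] /=; lia. Qed.

Lemma colsum_add_e V x y y' :
  colsum (add_e V x y) y' = (colsum V y' + (y' == y))%N.
Proof.
rewrite /colsum; under eq_bigr do rewrite ffunE.
rewrite big_split /=; congr (_ + _)%N.
have [->|ne] := eqVneq y' y.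
  by rewrite (bigD1 x) //= eqxx big1 // => x' /negbTE nx; rewrite xpair_eqE nx.
by rewrite big1 // => x' _; rewrite xpair_eqE (negbTE ne) andbF.
Qed.

Definition relocates W W' x yb y : bool :=
  (0 < W (x, yb))%N && (add_e (sub_e W x yb) x y == W').

Lemma relocatesP W W' x yb y :
  reflect (exists V, W = add_e V x yb /\ W' = add_e V x y)
          (relocates W W' x yb y).
Proof.
apply: (iffP andP) => [[Wxyb /eqP <-]|[V [-> ->]]].
  by exists (sub_e W x yb); rewrite add_e_subK.
by rewrite add_e_at sub_e_addK.
Qed.

Lemma relocates_sym W W' x yb y :
  relocates W W' x yb y = relocates W' W x y yb.
Proof. by apply/relocatesP/relocatesP => -[V [-> ->]]; exists V. Qed.

Lemma partial_alloc_avail (E : rel X) (alpha beta : X -> nat) V x y :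
  partial_alloc E alpha beta (add_e V x y) -> avail E beta V x y.
Proof.
move=> [offE _ col]; apply/andP; split.
  by apply/negPn/negP => /offE; rewrite add_e_at.
by have := col y; rewrite colsum_add_e eqxx addn1.
Qed.

End Relocation.

Section Reversibility.
Variables (X : finType) (E : rel X) (alpha beta : X -> nat) (R : realType).
Variables (lambda : X -> R) (kc ka gamma : R) (nu : X -> R).
Implicit Types (V W : state X) (x y yb : X).

Local Notation Psi := (Psi beta lambda kc ka).
Local Notation f := (f beta lambda kc ka).
Local Notation pchoice := (pchoice E beta lambda kc ka gamma).
Local Notation alloc := (alloc E alpha beta).

Lemma Psi_add_e V x y : Psi (add_e V x y) = Psi V + f (add_e V x y) x y.
Proof.
rewrite /Psi /f; under eq_bigr do rewrite colsum_add_e.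
rewrite (big_ord_bump _ _ (fun y s => lambda y - kc * s%:R / (beta y)%:R)).
rewrite !pair_bigA /= (eq_bigr (fun p => \sum_(s < (V p + (p == (x, y))).+1) s%:R));
  last by move=> [a b] _; rewrite ffunE.
rewrite (big_ord_bump _ _ (fun _ s => s%:R)) colsum_add_e eqxx addn1 add_e_at.
rewrite (eq_bigr (fun p => \sum_(s < (V (p.1, p.2)).+1) s%:R)); last by move=> [a b].
ring.
Qed.

Lemma multinom_add_e V x y :
  multinom alpha R (add_e V x y) * (add_e V x y (x, y))%:R = multinom alpha R V.
Proof.
rewrite /multinom (bigD1 (x, y)) //= [in RHS](bigD1 (x, y)) //= add_e_at.
have -> : \prod_(p | p != (x, y)) (add_e V x y p)`! = \prod_(p | p != (x, y)) (V p)`!.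
  by apply: eq_bigr => p /negbTE np; rewrite ffunE np addn0.
rewrite factS !natrM.
have rest_neq0 : (\prod_(p | p != (x, y)) (V p)`!)%:R != 0 :> R.
  by rewrite pnatr_eq0 -lt0n prodn_gt0 // => p; exact: fact_gt0.
have fact_neq0 : ((V (x, y))`!)%:R != 0 :> R by rewrite pnatr_eq0 -lt0n fact_gt0.
have succ_neq0 : ((V (x, y)).+1)%:R != 0 :> R by rewrite pnatr_eq0.
field; by rewrite rest_neq0 fact_neq0 addrC natr1 succ_neq0.
Qed.

Definition weight W : R := multinom alpha R W * expR (gamma * Psi W).

Lemma weight_add_e V x y :
  weight (add_e V x y) * (add_e V x y (x, y))%:R
  = weight V * expR (gamma * f (add_e V x y) x y).
Proof.
rewrite /weight Psi_add_e mulrDr expRD -(multinom_add_e V x y); ring.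
Qed.

Definition move_rate W W' x yb y : R :=
  nu x * ((W (x, yb))%:R / (rowsum W x)%:R)
  * ((avail E beta (sub_e W x yb) x y)%:R * pchoice (sub_e W x yb) x y)
  * (add_e (sub_e W x yb) x y == W')%:R.

Lemma rate_alloc Pall Pdis W W' :
  (forall x, Pall W x = 0) -> (forall x, Pdis W x = 1) ->
  rate E beta lambda kc ka gamma nu Pall Pdis W W'
  = \sum_x \sum_yb \sum_y move_rate W W' x yb y.
Proof.
move=> Pall0 Pdis1; rewrite /rate; apply: eq_bigr => x _.
rewrite Pall0 Pdis1 mul0r add0r mul1r mulr_sumr big_mkcond /=.
apply: eq_bigr => yb _; rewrite /move_rate lt0n.
have [->|_] /= := eqP; first by rewrite big1 // => y _; rewrite !mul0r !mulr0 !mul0r.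
rewrite !mulr_sumr big_mkcond /=; apply: eq_bigr => y _.
by case: avail; rewrite /= ?mul0r ?mulr0 ?mul0r ?mul1r ?mulrA.
Qed.

Lemma move_rate_eq0 W W' x yb y :
  ~~ relocates W W' x yb y -> move_rate W W' x yb y = 0.
Proof.
rewrite /relocates negb_and -leqNgt leqn0 /move_rate => /orP[/eqP ->|/negbTE ->].
  by rewrite !mul0r mulr0 !mul0r.
by rewrite mulr0.
Qed.

Lemma weight_move_rate_add_e V x yb y :
  alloc (add_e V x yb) -> alloc (add_e V x y) ->
  weight (add_e V x yb) * move_rate (add_e V x yb) (add_e V x y) x yb y
  = weight (add_e V x y) * move_rate (add_e V x y) (add_e V x yb) x y yb.
Proof.
pose e y' := expR (gamma * f (add_e V x y') x y').
pose Z := \sum_(y' | avail E beta V x y') e y'.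
suff flux y1 y2 : alloc (add_e V x y1) -> alloc (add_e V x y2) ->
    weight (add_e V x y1) * move_rate (add_e V x y1) (add_e V x y2) x y1 y2
    = nu x / (alpha x)%:R * weight V * (e y1 * e y2) / Z.
  by move=> a1 a2; rewrite !flux // [e y * _]mulrC.
move=> [_ row1] [part2 _].
rewrite /move_rate sub_e_addK row1 (partial_alloc_avail part2) eqxx /pchoice /=.
rewrite -/Z -/(e y2).
transitivity (weight (add_e V x y1) * (add_e V x y1 (x, y1))%:R
              * (nu x / (alpha x)%:R * (e y2 / Z))); first by ring.
by rewrite weight_add_e -/(e y1); ring.
Qed.

Lemma weight_move_rate_sym W W' x yb y :
  alloc W -> alloc W' ->
  weight W * move_rate W W' x yb y = weight W' * move_rate W' W x y yb.
Proof.
have [/relocatesP[V [-> ->]]|stuck] := boolP (relocates W W' x yb y).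
  exact: weight_move_rate_add_e.
by rewrite !move_rate_eq0 ?mulr0 // -relocates_sym.
Qed.

End Reversibility.

Theorem proposition2 (X : finType) (E : rel X) (alpha beta : X -> nat)
  (R : realType) (lambda : X -> R) (kc ka gamma : R)
  (nu : X -> R) (Pall Pdis : state X -> X -> R) :
  0 <= kc -> 0 <= ka -> 0 < gamma ->
  (forall x, 0 <= nu x) ->
  (forall W, partial_alloc E alpha beta W -> forall x,
      [/\ 0 <= Pall W x, 0 <= Pdis W x, Pall W x + Pdis W x = 1,
          (rowsum W x = alpha x -> Pall W x = 0) &
          (rowsum W x = 0%N -> Pdis W x = 0)]) ->
  forall W W' : state X,
    alloc E alpha beta W -> alloc E alpha beta W' -> W != W' ->
    multinom alpha R W * expR (gamma * Psi beta lambda kc ka W)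
      * rate E beta lambda kc ka gamma nu Pall Pdis W W'
    = multinom alpha R W' * expR (gamma * Psi beta lambda kc ka W')
      * rate E beta lambda kc ka gamma nu Pall Pdis W' W.
Proof.
move=> _ _ _ _ Pnorm W W' aW aW' _.
have rate_moves U U' : alloc E alpha beta U ->
    rate E beta lambda kc ka gamma nu Pall Pdis U U'
    = \sum_x \sum_yb \sum_y move_rate E beta lambda kc ka gamma nu U U' x yb y.
  move=> [pU full]; have Pall0 x : Pall U x = 0.
    by have [_ _ _ full0 _] := Pnorm U pU x; exact: full0 (full x).
  apply: rate_alloc => // x.
  by have [_ _ sum1 _ _] := Pnorm U pU x; rewrite Pall0 add0r in sum1.
rewrite !rate_moves // !mulr_sumr; apply: eq_bigr => x _.
rewrite [in RHS]exchange_big /= !mulr_sumr; apply: eq_bigr => yb _.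
rewrite !mulr_sumr; apply: eq_bigr => y _.
exact: weight_move_rate_sym.
Qed.
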